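(* Let $G$ be a path graph with $L=\lambda_1+\lambda_2$ edges, rooted at a vertex $O$ that is not an endpoint: there are $\lambda_1\ge1$ edges on one side of $O$ and $\lambda_2\ge1$ on the other. Let all edges have activation probability $p\in(0,1]$. Let $\varepsilon^*$ be the hider's distribution that puts probability $\lambda_1/L$ on the extreme (leaf) edge of the first side and $\lambda_2/L$ on the extreme edge of the second side. Then every depth-first strategy of the searcher is a best response to $\varepsilon^*$. Hence $\varepsilon^*$ and the uniform depth-first strategy form a pair of optimal strategies.
   Context: Setting: the stochastic search game on $G$. Every edge has length $1$ and is active at each stage independently with probability $p$. The hider chooses an edge and stays there. The searcher starts at $O$; at each stage, knowing which edges are currently active, she waits or traverses an active edge incident to her position. The hider's payoff is the expected first time the searcher traverses his edge. View the path as a tree rooted at $O$ with edges oriented away from $O$. A depth-first strategy (DFS) acts as follows at the searcher's current vertex: - if some untraversed outgoing edge is active, traverse one of them (possibly chosen at random); - if all untraversed outgoing edges are inactive, wait; - if all outgoing edges have been traversed, traverse the edge back toward $O$ when active, and wait otherwise. The uniform DFS chooses uniformly among the active untraversed outgoing edges. *)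

(* the stochastic search game on a path, with probabilities
   computed as finite sums over histories and expectations as series. *)
From Stdlib Require Import Reals List Arith Bool.
Import ListNotations.
Open Scope R_scope.

(* The path graph: vertices 0..L, edge j joins vertices j and j+1 (j < L).
   The root O is vertex l1, so there are l1 edges on the first (left) side and
   L - l1 on the second (right) side.  Edge 0 and edge L-1 are the extreme
   (leaf) edges of the first and second side. *)

Inductive act := Wait | GoL | GoR.

Definition act_eqb (x y : act) : bool :=
  match x, y with
  | Wait, Wait | GoL, GoL | GoR, GoR => true
  | _, _ => false
  end.

Definition act_mem (x : act) (l : list act) : bool := existsb (act_eqb x) l.

Definition mem_nat (e : nat) (l : list nat) : bool := existsb (Nat.eqb e) l.

(* activation configuration: entry j says whether edge j is active *)
Definition cfg := list bool.

Definition edge_active (a : cfg) (j : nat) : bool := nth j a false.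

Definition feasb (L : nat) (a : cfg) (v : nat) (x : act) : bool :=
  match x with
  | Wait => true
  | GoL => (0 <? v)%nat && edge_active a (v - 1)
  | GoR => (v <? L)%nat && edge_active a v
  end.

Definition edge_of (v : nat) (x : act) : nat :=
  match x with GoL => (v - 1)%nat | _ => v end.

Definition step_pos (v : nat) (x : act) : nat :=
  match x with Wait => v | GoL => (v - 1)%nat | GoR => (v + 1)%nat end.

(* histories: chronological lists of (activation at the stage, action taken) *)
Definition hist := list (cfg * act).

Fixpoint pos_after (v : nat) (h : hist) : nat :=
  match h with
  | [] => v
  | (_, x) :: h' => pos_after (step_pos v x) h'
  end.

Fixpoint crossed (v : nat) (h : hist) : list nat :=
  match h with
  | [] => []
  | (_, Wait) :: h' => crossed v h'
  | (_, x) :: h' => edge_of v x :: crossed (step_pos v x) h'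
  end.

(* behavioural (possibly randomized) searcher strategy:
   probability of action x given the past history and current activations *)
Definition strategy := hist -> cfg -> act -> R.

Definition valid_strategy (L O : nat) (s : strategy) : Prop :=
  forall (h : hist) (a : cfg),
    (forall x, 0 <= s h a x) /\
    (forall x, feasb L a (pos_after O h) x = false -> s h a x = 0) /\
    s h a Wait + s h a GoL + s h a GoR = 1.

Fixpoint all_cfgs (n : nat) : list cfg :=
  match n with
  | 0%nat => [[]]
  | S n => flat_map (fun c => [true :: c; false :: c]) (all_cfgs n)
  end.

Definition cfg_prob (p : R) (a : cfg) : R :=
  fold_right (fun (b : bool) (acc : R) => (if b then p else 1 - p) * acc) 1 a.

Fixpoint all_hists (L t : nat) : list hist :=
  match t with
  | 0%nat => [[]]
  | S t => flat_map (fun h => flat_map (fun a =>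
             map (fun x => h ++ [(a, x)]) [Wait; GoL; GoR]) (all_cfgs L))
           (all_hists L t)
  end.

Fixpoint hist_prob_aux (p : R) (s : strategy) (past future : hist) : R :=
  match future with
  | [] => 1
  | (a, x) :: f => cfg_prob p a * s past a x * hist_prob_aux p s (past ++ [(a, x)]) f
  end.

Definition hist_prob (p : R) (s : strategy) (h : hist) : R := hist_prob_aux p s [] h.

Definition rsum (f : nat -> R) (n : nat) : R :=
  fold_right (fun i acc => f i + acc) 0 (seq 0 n).

(* P(T > t): probability that edge e is not traversed during stages 1..t *)
Definition surv (L O : nat) (p : R) (s : strategy) (e t : nat) : R :=
  fold_right Rplus 0
    (map (fun h => hist_prob p s h * (if mem_nat e (crossed O h) then 0 else 1))
       (all_hists L t)).

(* partial sums of E[T] = sum_{t>=0} P(T > t), against a mixed hider q *)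
Definition partial_payoff (L O : nat) (p : R) (s : strategy) (q : nat -> R) (n : nat) : R :=
  rsum (fun e => q e * rsum (fun t => surv L O p s e t) n) L.

(* payoff(s1,q1) <= payoff(s2,q2) as extended reals (sups of nondecreasing
   partial sums, possibly +infinity) *)
Definition payoff_le (L O : nat) (p : R) (s1 : strategy) (q1 : nat -> R)
  (s2 : strategy) (q2 : nat -> R) : Prop :=
  forall n, exists m, partial_payoff L O p s1 q1 n <= partial_payoff L O p s2 q2 m.

Definition hider_dist (L : nat) (q : nat -> R) : Prop :=
  (forall e, (e < L)%nat -> 0 <= q e) /\ rsum q L = 1.

Definition best_response (L O : nat) (p : R) (s : strategy) (q : nat -> R) : Prop :=
  valid_strategy L O s /\
  forall s', valid_strategy L O s' -> payoff_le L O p s q s' q.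

Definition eps_star (l1 l2 : nat) : nat -> R :=
  fun e => if (e =? 0)%nat then INR l1 / INR (l1 + l2)
           else if (e =? l1 + l2 - 1)%nat then INR l2 / INR (l1 + l2) else 0.

(* outgoing moves (edges oriented away from O) at vertex v *)
Definition outgoing (L O v : nat) : list act :=
  if (v =? O)%nat then [GoL; GoR]
  else if (v <? O)%nat then (if (0 <? v)%nat then [GoL] else [])
  else (if (v <? L)%nat then [GoR] else []).

Definition back (O v : nat) : option act :=
  if (v =? O)%nat then None else if (v <? O)%nat then Some GoR else Some GoL.

Definition untrav_out (L O : nat) (h : hist) : list act :=
  let v := pos_after O h in
  filter (fun x => negb (mem_nat (edge_of v x) (crossed O h))) (outgoing L O v).

Definition active_untrav_out (L O : nat) (h : hist) (a : cfg) : list act :=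
  filter (feasb L a (pos_after O h)) (untrav_out L O h).

Definition is_DFS (L O : nat) (s : strategy) : Prop :=
  valid_strategy L O s /\
  forall (h : hist) (a : cfg),
    let v := pos_after O h in
    let U := untrav_out L O h in
    let UA := active_untrav_out L O h a in
    (UA <> [] -> forall x, act_mem x UA = false -> s h a x = 0) /\
    (UA = [] -> U <> [] -> s h a Wait = 1) /\
    (U = [] ->
       match back O v with
       | Some b => (feasb L a v b = true -> s h a b = 1) /\
                   (feasb L a v b = false -> s h a Wait = 1)
       | None => s h a Wait = 1
       end).

Definition ind (b : bool) : R := if b then 1 else 0.

Definition uDFS (L O : nat) : strategy :=
  fun h a x =>
    let v := pos_after O h in
    let U := untrav_out L O h in
    let UA := active_untrav_out L O h a in
    match UA with
    | _ :: _ => if act_mem x UA then / INR (length UA) else 0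
    | [] =>
      match U with
      | _ :: _ => ind (act_eqb x Wait)
      | [] =>
        match back O v with
        | Some b => if feasb L a v b then ind (act_eqb x b) else ind (act_eqb x Wait)
        | None => ind (act_eqb x Wait)
        end
      end
    end.

(* Because eps* hides only on the two leaf edges, the searcher's state reduces to her position and
   which of the two leaf edges she has already traversed.  On these reduced states we define an
   explicit potential: the expected remaining cost (weight of the unfound leaf edges, summed over
   stages) of a depth-first search.  It satisfies a Bellman equation whose minimizing moves are
   exactly the depth-first moves; for the weights (l1, l2) of eps* both branches at the root have
   the same value, so the potential is a lower bound for every strategy and is attained by every
   depth-first strategy (and, for arbitrary weights, by the uniform one, which is fair at the root). *)

From Pilot Require Import Defs.
From Stdlib Require Import Reals List Arith Bool Lra Lia ZArith.
Import ListNotations.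
Open Scope R_scope.

Definition lsum {A : Type} (l : list A) (f : A -> R) : R :=
  fold_right (fun x acc => f x + acc) 0 l.

Lemma lsum_app {A} (l1 l2 : list A) f : lsum (l1 ++ l2) f = lsum l1 f + lsum l2 f.
Proof. induction l1 as [|x l1 IH]; simpl; [lra|]. unfold lsum in *; simpl. rewrite IH. lra. Qed.

Lemma lsum_map {A B} (g : A -> B) l f : lsum (map g l) f = lsum l (fun x => f (g x)).
Proof. induction l as [|x l IH]; simpl; auto. unfold lsum in *; simpl; rewrite IH; auto. Qed.

Lemma lsum_flat_map {A B} (g : A -> list B) l f :
  lsum (flat_map g l) f = lsum l (fun x => lsum (g x) f).
Proof. induction l as [|x l IH]; simpl; auto. rewrite lsum_app, IH. reflexivity. Qed.

Lemma lsum_le {A} (l : list A) f g :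
  (forall x, In x l -> f x <= g x) -> lsum l f <= lsum l g.
Proof.
  induction l as [|y l IH]; intros H; simpl; [lra|]. unfold lsum in *; simpl.
  assert (f y <= g y) by (apply H; left; auto).
  assert (fold_right (fun x acc => f x + acc) 0 l <= fold_right (fun x acc => g x + acc) 0 l)
    by (apply IH; intros; apply H; right; auto).
  lra.
Qed.

Lemma lsum_ext {A} (l : list A) f g : (forall x, In x l -> f x = g x) -> lsum l f = lsum l g.
Proof.
  intros H. apply Rle_antisym; apply lsum_le; intros x Hx; rewrite H; auto; lra.
Qed.

Lemma lsum_plus {A} (l : list A) f g : lsum l (fun x => f x + g x) = lsum l f + lsum l g.
Proof. induction l as [|x l IH]; simpl; [lra|]. unfold lsum in *; simpl. rewrite IH. lra. Qed.

Lemma lsum_scal {A} (l : list A) c f : lsum l (fun x => c * f x) = c * lsum l f.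
Proof. induction l as [|x l IH]; simpl; [lra|]. unfold lsum in *; simpl. rewrite IH. lra. Qed.

Lemma lsum_nonneg {A} (l : list A) f : (forall x, In x l -> 0 <= f x) -> 0 <= lsum l f.
Proof.
  intros H. replace 0 with (0 * lsum l (fun _ => 0)) by ring.
  rewrite <- lsum_scal. apply lsum_le. intros x Hx. rewrite Rmult_0_l. auto.
Qed.

Lemma lsum_ge_term {A} (l : list A) f y :
  In y l -> (forall x, In x l -> 0 <= f x) -> f y <= lsum l f.
Proof.
  induction l as [|z l IH]; intros Hy H; simpl in *; [contradiction|]. unfold lsum in *; simpl.
  assert (0 <= f z) by (apply H; left; auto).
  assert (0 <= fold_right (fun x acc => f x + acc) 0 l)
    by (apply (lsum_nonneg l f); intros; apply H; right; auto).
  destruct Hy as [<-|Hy]; [lra|].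
  assert (f y <= fold_right (fun x acc => f x + acc) 0 l) by (apply IH; auto). lra.
Qed.

Lemma fold_map_lsum {A} (l : list A) f : fold_right Rplus 0 (map f l) = lsum l f.
Proof. induction l as [|x l IH]; simpl; auto. rewrite IH; reflexivity. Qed.

Lemma rsum_S f n : rsum f (S n) = rsum f n + f n.
Proof.
  change (lsum (seq 0 (S n)) f = lsum (seq 0 n) f + f n).
  rewrite seq_S, lsum_app. unfold lsum at 2. simpl. lra.
Qed.

Lemma rsum_shift f n : rsum f (S n) = f 0%nat + rsum (fun i => f (S i)) n.
Proof.
  change (lsum (seq 0 (S n)) f = f 0%nat + lsum (seq 0 n) (fun i => f (S i))).
  simpl. rewrite <- seq_shift, lsum_map. reflexivity.
Qed.

Lemma rsum_le f g n : (forall i, (i < n)%nat -> f i <= g i) -> rsum f n <= rsum g n.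
Proof.
  intros H. apply lsum_le. intros x Hx. apply in_seq in Hx. apply H; lia.
Qed.

Lemma rsum_ext f g n : (forall i, (i < n)%nat -> f i = g i) -> rsum f n = rsum g n.
Proof.
  intros H. apply Rle_antisym; apply rsum_le; intros i Hi; rewrite H; auto; lra.
Qed.

Lemma rsum_plus f g n : rsum (fun i => f i + g i) n = rsum f n + rsum g n.
Proof. apply lsum_plus. Qed.

Lemma rsum_scal c f n : rsum (fun i => c * f i) n = c * rsum f n.
Proof. apply lsum_scal. Qed.

Lemma rsum_endpoints f n : (2 <= n)%nat -> (forall i, (0 < i < n - 1)%nat -> f i = 0) ->
  rsum f n = f 0%nat + f (n - 1)%nat.
Proof.
  intros Hn H. destruct n as [|[|k]]; try lia.
  rewrite rsum_S, rsum_shift, (rsum_ext _ (fun _ => 0 * 0)), rsum_scal.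
  - replace (S (S k) - 1)%nat with (S k) by lia. lra.
  - intros i Hi. rewrite H by lia. ring.
Qed.

Lemma rsum_weighted_bound q f n Y : (forall e, (e < n)%nat -> 0 <= q e /\ f e <= Y) ->
  rsum (fun e => q e * f e) n <= Y * rsum q n.
Proof.
  intros H. rewrite <- rsum_scal. apply rsum_le. intros i Hi.
  destruct (H i Hi). rewrite Rmult_comm. apply Rmult_le_compat_r; auto.
Qed.

Lemma rsum_nonincreasing_lb (e : nat -> R) m :
  (forall t, 0 <= e t) -> (forall t, e (S t) <= e t) -> INR m * e m <= rsum e m.
Proof.
  intros H0 H1. induction m.
  - simpl. change (rsum e 0) with 0. lra.
  - rewrite rsum_S, S_INR. pose proof (H1 m). pose proof (pos_INR m).
    assert (INR m * e (S m) <= INR m * e m) by (apply Rmult_le_compat_l; auto). lra.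
Qed.

Lemma exists_nat_ge r : exists m : nat, r <= INR m.
Proof.
  destruct (archimed r) as [H1 H2]. exists (Z.to_nat (up r)).
  destruct (Z_le_gt_dec 0 (up r)) as [Hz|Hz].
  - rewrite INR_IZR_INZ, Z2Nat.id by lia. lra.
  - assert (IZR (up r) < 0) by (apply IZR_lt; lia). pose proof (pos_INR (Z.to_nat (up r))). lra.
Qed.

(** Averages over activation configurations.  [lsum (all_cfgs n) (cfg_prob p a * G a)] is the
    expectation of [G] when each of the [n] edges is active independently with probability [p]. *)

(* condition on the state of the first edge *)
Lemma cfg_avg_step p n G :
  lsum (all_cfgs (S n)) (fun a => cfg_prob p a * G a) =
  lsum (all_cfgs n) (fun c => cfg_prob p c * (p * G (true :: c) + (1 - p) * G (false :: c))).
Proof.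
  simpl. rewrite lsum_flat_map. apply lsum_ext. intros c _.
  unfold lsum. simpl. ring.
Qed.

Lemma cfg_avg_const p n K : lsum (all_cfgs n) (fun a => cfg_prob p a * K) = K.
Proof.
  induction n; [unfold lsum; simpl; ring|].
  rewrite cfg_avg_step, <- IHn at 1. apply lsum_ext. intros; ring.
Qed.

Lemma cfg_avg_minus p n (B : cfg -> R) K :
  lsum (all_cfgs n) (fun a => cfg_prob p a * (B a - K)) =
  lsum (all_cfgs n) (fun a => cfg_prob p a * B a) - K.
Proof.
  rewrite (lsum_ext _ _ (fun a => cfg_prob p a * B a + (- K) * cfg_prob p a)) by (intros; ring).
  rewrite lsum_plus, lsum_scal.
  rewrite (lsum_ext _ (fun a => cfg_prob p a) (fun a => cfg_prob p a * 1)) by (intros; ring).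
  rewrite cfg_avg_const. ring.
Qed.

Lemma cfg_prob_nonneg p a : 0 <= p <= 1 -> 0 <= cfg_prob p a.
Proof. intros Hp. induction a as [|[] a IH]; simpl; [lra| |]; apply Rmult_le_pos; lra. Qed.

Lemma cfg_avg_one p n j (G : cfg -> R) (g : bool -> R) : (j < n)%nat ->
  (forall a, G a = g (nth j a false)) ->
  lsum (all_cfgs n) (fun a => cfg_prob p a * G a) = p * g true + (1 - p) * g false.
Proof.
  revert j G. induction n; intros j G Hj HG; [lia|].
  rewrite cfg_avg_step. destruct j.
  - rewrite <- (cfg_avg_const p n (p * g true + (1 - p) * g false)).
    apply lsum_ext; intros; rewrite !HG; reflexivity.
  - rewrite <- (IHn j (fun c => g (nth j c false))); [|lia|reflexivity].
    apply lsum_ext; intros; rewrite !HG; simpl; ring.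
Qed.

Lemma cfg_avg_two p n j k (G : cfg -> R) (g : bool -> bool -> R) :
  (j < n)%nat -> (k < n)%nat -> j <> k ->
  (forall a, G a = g (nth j a false) (nth k a false)) ->
  lsum (all_cfgs n) (fun a => cfg_prob p a * G a) =
  p * p * g true true + p * (1 - p) * g true false + (1 - p) * p * g false true
  + (1 - p) * (1 - p) * g false false.
Proof.
  revert j k G. induction n; intros j k G Hj Hk Hjk HG; [lia|].
  rewrite cfg_avg_step. destruct j, k; try lia.
  - rewrite (cfg_avg_one p n k _ (fun b => p * g true b + (1 - p) * g false b)); [ring|lia|].
    intros; rewrite !HG; simpl; ring.
  - rewrite (cfg_avg_one p n j _ (fun b => p * g b true + (1 - p) * g b false)); [ring|lia|].
    intros; rewrite !HG; simpl; ring.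
  - rewrite <- (IHn j k (fun c => g (nth j c false) (nth k c false))); try lia; [|reflexivity].
    apply lsum_ext; intros; rewrite !HG; simpl; ring.
Qed.

Lemma cfg_avg_if p n j K X Y : (j < n)%nat ->
  lsum (all_cfgs n) (fun a => cfg_prob p a * (K + if nth j a false then X else Y)) =
  K + p * X + (1 - p) * Y.
Proof.
  intros Hj. rewrite (cfg_avg_one p n j _ (fun b => K + if b then X else Y)); auto. ring.
Qed.

Lemma cfg_avg_if2 p n j k K X Y Z U : (j < n)%nat -> (k < n)%nat -> j <> k ->
  lsum (all_cfgs n) (fun a => cfg_prob p a * (K + if nth j a false then
       (if nth k a false then X else Y) else (if nth k a false then Z else U))) =
  K + p * p * X + p * (1 - p) * Y + (1 - p) * p * Z + (1 - p) * (1 - p) * U.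
Proof.
  intros Hj Hk Hjk.
  rewrite (cfg_avg_two p n j k _
    (fun b c => K + if b then (if c then X else Y) else (if c then Z else U))); auto.
  ring.
Qed.

Lemma cfg_avg_p1 p n G : p = 1 ->
  lsum (all_cfgs n) (fun a => cfg_prob p a * G a) = G (repeat true n).
Proof.
  intros ->. revert G. induction n; intros G; [unfold lsum; simpl; ring|].
  rewrite cfg_avg_step. change (G (repeat true (S n))) with ((fun c => G (true :: c)) (repeat true n)).
  rewrite <- IHn. apply lsum_ext; intros; ring.
Qed.

Lemma all_inactive_in n : In (repeat false n) (all_cfgs n).
Proof.
  induction n; simpl; auto. apply in_flat_map. exists (repeat false n). simpl; auto.
Qed.

Lemma cfg_prob_all_inactive p n : cfg_prob p (repeat false n) = (1 - p) ^ n.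
Proof. induction n; simpl; auto. rewrite IHn; ring. Qed.

Lemma nth_repeat_false n j : nth j (repeat false n) false = false.
Proof. revert j; induction n; intros [|j]; simpl; auto. Qed.

Lemma hist_prob_snoc p s h a x :
  hist_prob p s (h ++ [(a, x)]) = hist_prob p s h * (cfg_prob p a * s h a x).
Proof.
  assert (Haux : forall past, hist_prob_aux p s past (h ++ [(a, x)]) =
    hist_prob_aux p s past h * (cfg_prob p a * s (past ++ h) a x)).
  { induction h as [|[b y] h IH]; intros past; simpl.
    - rewrite app_nil_r. ring.
    - rewrite IH, <- app_assoc. simpl. ring. }
  apply Haux.
Qed.

Lemma pos_after_snoc v h a x : pos_after v (h ++ [(a, x)]) = step_pos (pos_after v h) x.
Proof. revert v; induction h as [|[b y] h IH]; intros v; simpl; auto. Qed.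

Definition is_move (x : act) : bool := match x with Wait => false | _ => true end.

Lemma crossed_snoc e v h a x : mem_nat e (crossed v (h ++ [(a, x)])) =
  mem_nat e (crossed v h) || (is_move x && (e =? edge_of (pos_after v h) x)%nat).
Proof.
  revert v; induction h as [|[b y] h IH]; intros v; simpl.
  - destruct x; unfold mem_nat; simpl; rewrite ?orb_false_r; reflexivity.
  - destruct y; simpl; rewrite ?IH; unfold mem_nat; simpl; rewrite ?orb_assoc; reflexivity.
Qed.

Definition act_mean (s : strategy) (h : hist) (a : cfg) (V : act -> R) : R :=
  s h a Wait * V Wait + s h a GoL * V GoL + s h a GoR * V GoR.

Section Expectation.
Variables (L O : nat) (p : R).
Hypothesis Hp : 0 <= p <= 1.

Definition Ex (s : strategy) (t : nat) (f : hist -> R) : R :=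
  lsum (all_hists L t) (fun h => hist_prob p s h * f h).

Definition next_exp (s : strategy) (f : hist -> R) (h : hist) : R :=
  lsum (all_cfgs L) (fun a => cfg_prob p a * act_mean s h a (fun x => f (h ++ [(a, x)]))).

Lemma Ex_0 s f : Ex s 0 f = f [].
Proof. unfold Ex, lsum. simpl. unfold hist_prob. simpl. ring. Qed.

Lemma Ex_S s t f : Ex s (S t) f = Ex s t (next_exp s f).
Proof.
  unfold Ex, next_exp. simpl. rewrite lsum_flat_map. apply lsum_ext. intros h _.
  rewrite lsum_flat_map, <- lsum_scal. apply lsum_ext. intros a _.
  unfold lsum. simpl. rewrite !hist_prob_snoc. unfold act_mean. ring.
Qed.

Lemma Ex_plus s t f g : Ex s t (fun h => f h + g h) = Ex s t f + Ex s t g.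
Proof. unfold Ex. rewrite <- lsum_plus. apply lsum_ext; intros; ring. Qed.

Lemma Ex_scal s t c f : Ex s t (fun h => c * f h) = c * Ex s t f.
Proof. unfold Ex. rewrite <- lsum_scal. apply lsum_ext; intros; ring. Qed.

Lemma Ex_minus s t f g : Ex s t (fun h => f h - g h) = Ex s t f - Ex s t g.
Proof.
  unfold Rminus. rewrite <- (Rmult_1_l (Ex s t g)), Ropp_mult_distr_l, <- Ex_scal, <- Ex_plus.
  unfold Ex. apply lsum_ext; intros; ring.
Qed.

Variable s : strategy.
Hypothesis Hs : valid_strategy L O s.

Lemma s_nonneg h a x : 0 <= s h a x.
Proof. apply (Hs h a). Qed.

Lemma s_feasible h a x : s h a x <> 0 -> feasb L a (pos_after O h) x = true.
Proof.
  intros H. destruct (feasb L a (pos_after O h) x) eqn:E; auto.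
  exfalso. apply H, (Hs h a); auto.
Qed.

Lemma s_support_single h a x y : s h a y = 1 -> s h a x <> 0 -> x = y.
Proof.
  intros Hy Hx. destruct (Hs h a) as [Hnn [_ Hsum]].
  pose proof (Hnn Wait); pose proof (Hnn GoL); pose proof (Hnn GoR).
  destruct x, y; auto; exfalso; apply Hx; lra.
Qed.

Lemma hist_prob_nonneg h : 0 <= hist_prob p s h.
Proof.
  induction h as [|[a x] h IH] using rev_ind.
  - unfold hist_prob; simpl; lra.
  - rewrite hist_prob_snoc. apply Rmult_le_pos; auto.
    apply Rmult_le_pos; [apply cfg_prob_nonneg; auto | apply s_nonneg].
Qed.

Lemma support_ind (P : hist -> Prop) : P [] ->
  (forall h a x, P h -> s h a x <> 0 -> P (h ++ [(a, x)])) ->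
  forall h, hist_prob p s h <> 0 -> P h.
Proof.
  intros H0 Hst h. induction h as [|[a x] h IH] using rev_ind; intros Hne; auto.
  rewrite hist_prob_snoc in Hne. apply Hst.
  - apply IH. intros E; apply Hne; rewrite E; ring.
  - intros E; apply Hne; rewrite E; ring.
Qed.

Lemma Ex_mono t f g : (forall h, hist_prob p s h <> 0 -> f h <= g h) -> Ex s t f <= Ex s t g.
Proof.
  intros H. unfold Ex. apply lsum_le. intros h _.
  destruct (Req_dec (hist_prob p s h) 0) as [E|E].
  - rewrite E; lra.
  - apply Rmult_le_compat_l; auto. apply hist_prob_nonneg.
Qed.

Lemma Ex_ext t f g : (forall h, hist_prob p s h <> 0 -> f h = g h) -> Ex s t f = Ex s t g.
Proof.
  intros H. apply Rle_antisym; apply Ex_mono; intros h Hh; rewrite H; auto; lra.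
Qed.

Lemma Ex_nonneg t f : (forall h, hist_prob p s h <> 0 -> 0 <= f h) -> 0 <= Ex s t f.
Proof.
  intros H. rewrite <- (Rmult_0_l (Ex s t (fun _ => 1))), <- Ex_scal.
  apply Ex_mono. intros h Hh. rewrite Rmult_0_l. auto.
Qed.

Lemma act_mean_ge h a (V : act -> R) B :
  (forall x, s h a x <> 0 -> B <= V x) -> B <= act_mean s h a V.
Proof.
  intros H. unfold act_mean. destruct (Hs h a) as [_ [_ Hsum]].
  assert (Hx : forall x, s h a x * B <= s h a x * V x).
  { intros x. destruct (Req_dec (s h a x) 0) as [E|E].
    - rewrite E; lra.
    - apply Rmult_le_compat_l; auto. apply s_nonneg. }
  pose proof (Hx Wait); pose proof (Hx GoL); pose proof (Hx GoR).
  replace B with (B * (s h a Wait + s h a GoL + s h a GoR)) by (rewrite Hsum; ring). lra.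
Qed.

Lemma act_mean_le h a (V : act -> R) B :
  (forall x, s h a x <> 0 -> V x <= B) -> act_mean s h a V <= B.
Proof.
  intros H. assert (- B <= act_mean s h a (fun x => - V x)).
  { apply act_mean_ge. intros x Hx. specialize (H x Hx). lra. }
  unfold act_mean in *. lra.
Qed.

Lemma act_mean_eq h a (V : act -> R) B :
  (forall x, s h a x <> 0 -> V x = B) -> act_mean s h a V = B.
Proof.
  intros H. apply Rle_antisym; [apply act_mean_le|apply act_mean_ge];
    intros x Hx; rewrite H; auto; lra.
Qed.

Lemma act_mean_plus_const h a (V : act -> R) c :
  act_mean s h a (fun x => c + V x) = c + act_mean s h a V.
Proof.
  destruct (Hs h a) as [_ [_ Hsum]]. unfold act_mean.
  replace c with (c * 1) at 4 by ring. rewrite <- Hsum. ring.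
Qed.

End Expectation.

(** Since the hider sits on a leaf edge, the searcher's relevant state is reduced to
    her position [v] and the two flags [c0], [c1] telling whether the leaf edges [0] and [L-1] have
    been traversed.  Against weights [w0], [w1] on these two edges, [potential w0 w1 v c0 c1] is the
    expected remaining search cost of a depth-first search; traversing one edge takes [1/p] stages
    on average, and leaving the root, where two edges are available, takes [1/(p(2-p))] stages. *)

Ltac nat_cases :=
  repeat match goal with
  | |- context [(?a <? ?b)%nat] => destruct (Nat.ltb_spec a b); try lia
  | |- context [(?a =? ?b)%nat] => destruct (Nat.eqb_spec a b); try lia
  end.

Ltac inr_simpl :=
  repeat (rewrite minus_INR by lia); repeat rewrite plus_INR; repeat rewrite INR_1;
  repeat rewrite INR_0.

Ltac inr_le a b := assert (INR a <= INR b) by (apply le_INR; lia).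
Ltac inr_lt a b :=
  assert (INR a + 1 <= INR b) by (rewrite <- INR_1, <- plus_INR; apply le_INR; lia).
Ltac inr_rewrite x e := let Hq := fresh in assert (Hq : INR x = e) by
  (repeat rewrite <- INR_1; repeat rewrite <- plus_INR; try rewrite <- minus_INR by lia;
   f_equal; lia);
  rewrite Hq in *; clear Hq.
Ltac position_facts v l1 l2 :=
  try inr_le 1%nat v; try inr_le v (l1 + l2)%nat; try inr_lt v (l1 + l2)%nat;
  try inr_le l1 v; try inr_le v l1; try inr_lt l1 v; try inr_lt v l1;
  repeat rewrite plus_INR in *; repeat rewrite INR_1 in *;
  try inr_rewrite v 1; try inr_rewrite l1 1; try inr_rewrite l2 1;
  try inr_rewrite v (INR l1 + INR l2); try inr_rewrite v (INR l1 + INR l2 - 1);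
  try inr_rewrite v (INR l1 + 1); try inr_rewrite v (INR l1 - 1).

Section Game.
Variables (l1 l2 : nat) (p : R).
Hypotheses (Hl1 : (1 <= l1)%nat) (Hl2 : (1 <= l2)%nat) (Hp : 0 < p <= 1).
Notation L := (l1 + l2)%nat.
Let Hp01 : 0 <= p <= 1. Proof. lra. Qed.

Definition edge_time : R := / p.
Definition root_time : R := / (p * (2 - p)).

Lemma edge_time_ge1 : 1 <= edge_time.
Proof. unfold edge_time. rewrite <- Rinv_1. apply Rinv_le_contravar; lra. Qed.

Lemma root_time_ge1 : 1 <= root_time.
Proof.
  unfold root_time. rewrite <- Rinv_1. apply Rinv_le_contravar; [|nra].
  apply Rmult_lt_0_compat; lra.
Qed.

Definition potential (w0 w1 : R) (v : nat) (c0 c1 : bool) : R :=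
  match c0, c1 with
  | true, true => 0
  | true, false => w1 * (INR L - INR v) * edge_time
  | false, true => w0 * INR v * edge_time
  | false, false =>
      if (v <? l1)%nat then ((w0 + w1) * INR v + w1 * INR L) * edge_time
      else if (l1 <? v)%nat then ((w0 + w1) * (INR L - INR v) + w0 * INR L) * edge_time
      else (w0 + w1) * (root_time + (INR L - 1) * edge_time)
  end.

(* the weight of the leaf edges not yet found: the cost incurred by one more stage *)
Definition unfound_weight (w0 w1 : R) (c0 c1 : bool) : R :=
  (if c0 then 0 else w0) + (if c1 then 0 else w1).

(* the remaining cost after leaving the root, nothing found, to the left resp. to the right *)
Definition root_left_value w0 w1 := ((w0 + w1) * (INR l1 - 1) + w1 * INR L) * edge_time.
Definition root_right_value w0 w1 := ((w0 + w1) * (INR L - INR l1 - 1) + w0 * INR L) * edge_time.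

(* the hider's distribution eps* makes the searcher indifferent at the root *)
Lemma root_values_balanced :
  root_left_value (INR l1) (INR l2) = root_right_value (INR l1) (INR l2).
Proof. unfold root_left_value, root_right_value. rewrite plus_INR. ring. Qed.

Definition move_value (w0 w1 : R) (v : nat) (c0 c1 : bool) (x : act) : R :=
  unfound_weight w0 w1 c0 c1 +
  potential w0 w1 (step_pos v x) (c0 || is_move x && (0 =? edge_of v x)%nat)
    (c1 || is_move x && (L - 1 =? edge_of v x)%nat).

(* [best_next] is [move_value] of the depth-first move under the activation [a]; at the root with
   both edges active and nothing found the two possible moves are averaged *)
Definition best_next (w0 w1 : R) (v : nat) (c0 c1 : bool) (a : cfg) : R :=
  unfound_weight w0 w1 c0 c1 +
  match c0, c1 with
  | true, true => 0
  | true, false =>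
      if nth v a false then w1 * (INR L - INR v - 1) * edge_time else potential w0 w1 v c0 c1
  | false, true =>
      if nth (v - 1) a false then w0 * (INR v - 1) * edge_time else potential w0 w1 v c0 c1
  | false, false =>
      if (v <? l1)%nat then
        (if nth (v - 1) a false then ((w0 + w1) * (INR v - 1) + w1 * INR L) * edge_time
         else potential w0 w1 v c0 c1)
      else if (l1 <? v)%nat then
        (if nth v a false then ((w0 + w1) * (INR L - INR v - 1) + w0 * INR L) * edge_time
         else potential w0 w1 v c0 c1)
      else
        (if nth (l1 - 1) a false then
           (if nth l1 a false then (root_left_value w0 w1 + root_right_value w0 w1) / 2
            else root_left_value w0 w1)
         else (if nth l1 a false then root_right_value w0 w1 else potential w0 w1 v c0 c1))
  end.

Definition consistent_state (v : nat) (c0 c1 : bool) : Prop :=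
  (v <= L)%nat /\ (v = 0%nat -> c0 = true) /\ (v = L -> c1 = true).

Lemma potential_bellman w0 w1 v c0 c1 : consistent_state v c0 c1 ->
  lsum (all_cfgs L) (fun a => cfg_prob p a * best_next w0 w1 v c0 c1 a) =
  potential w0 w1 v c0 c1.
Proof.
  intros [HvL [H0 HL]]. unfold best_next.
  destruct c0, c1.
  - rewrite cfg_avg_const. unfold unfound_weight, potential; ring.
  - assert (v <> L) by (intro E; specialize (HL E); discriminate).
    rewrite cfg_avg_if by lia. unfold unfound_weight, potential, edge_time. field. lra.
  - assert (v <> 0%nat) by (intro E; specialize (H0 E); discriminate).
    rewrite cfg_avg_if by lia. unfold unfound_weight, potential, edge_time. field. lra.
  - assert (v <> L) by (intro E; specialize (HL E); discriminate).
    assert (v <> 0%nat) by (intro E; specialize (H0 E); discriminate).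
    unfold potential; nat_cases.
    + rewrite cfg_avg_if by lia. unfold unfound_weight, edge_time. field. lra.
    + rewrite cfg_avg_if by lia. unfold unfound_weight, edge_time. field. lra.
    + assert (v = l1) by lia. subst v. rewrite cfg_avg_if2 by lia.
      unfold unfound_weight, root_left_value, root_right_value, edge_time, root_time.
      rewrite plus_INR. field. split; lra.
Qed.

Ltac weight_facts :=
  pose proof edge_time_ge1; pose proof root_time_ge1;
  assert (1 <= INR l1) by (apply (le_INR 1); lia); assert (1 <= INR l2) by (apply (le_INR 1); lia);
  assert (0 <= INR l1 * edge_time) by (apply Rmult_le_pos; lra);
  assert (0 <= INR l2 * edge_time) by (apply Rmult_le_pos; lra);
  assert (0 <= INR l1 * root_time) by (apply Rmult_le_pos; lra);
  assert (0 <= INR l2 * root_time) by (apply Rmult_le_pos; lra).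

Lemma best_next_le_move v c0 c1 a x : consistent_state v c0 c1 -> feasb L a v x = true ->
  best_next (INR l1) (INR l2) v c0 c1 a <= move_value (INR l1) (INR l2) v c0 c1 x.
Proof.
  intros [HvL [H0 HL]] Hf. weight_facts. unfold move_value.
  destruct x; cbn [step_pos edge_of is_move orb andb feasb] in *;
  [|apply andb_prop in Hf; destruct Hf as [Hv Ha]; apply Nat.ltb_lt in Hv; unfold edge_active in Ha..];
  destruct c0, c1; cbn [orb andb];
  unfold best_next, potential, unfound_weight, root_left_value, root_right_value; nat_cases;
  try (let Hvl := fresh in assert (Hvl : v = l1) by lia; rewrite Hvl in *);
  try rewrite Ha;
  repeat match goal with |- context [nth ?j a false] => destruct (nth j a false) end;
  inr_simpl; position_facts v l1 l2; try lra.
Qed.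

(* At the root with nothing found it prefers the left edge; once both leaf
   edges are found every move has value zero and it waits. *)
Definition greedy_move (v : nat) (c0 c1 : bool) (a : cfg) : act :=
  let go d := if feasb L a v d then d else Wait in
  match c0, c1 with
  | true, true => Wait
  | true, false => go GoR
  | false, true => go GoL
  | false, false =>
      if (v <? l1)%nat then go GoL
      else if (l1 <? v)%nat then go GoR
      else if feasb L a v GoL then GoL else go GoR
  end.

(* the only situation with a genuine choice: at the root, nothing found, both edges active *)
Definition root_fork (v : nat) (c0 c1 : bool) (a : cfg) : bool :=
  (v =? l1)%nat && negb c0 && negb c1 && nth (l1 - 1) a false && nth l1 a false.

Lemma greedy_move_value w0 w1 v c0 c1 a : consistent_state v c0 c1 ->
  root_fork v c0 c1 a = false ->
  move_value w0 w1 v c0 c1 (greedy_move v c0 c1 a) = best_next w0 w1 v c0 c1 a.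
Proof.
  intros [HvL [H0 HL]] Hfork. unfold root_fork, greedy_move in *.
  destruct c0, c1; cbn [negb andb] in *; [unfold move_value, best_next, unfound_weight; simpl; ring|..];
  unfold feasb, edge_active; nat_cases;
  try (let Hvl := fresh in assert (Hvl : v = l1) by lia; rewrite Hvl in *; rewrite Nat.eqb_refl in Hfork);
  repeat match goal with |- context [nth ?j a false] => destruct (nth j a false) eqn:? end;
  cbn [andb] in Hfork; try discriminate;
  unfold move_value, best_next, potential, unfound_weight, root_left_value, root_right_value;
  cbn [step_pos edge_of is_move orb andb]; nat_cases;
  repeat match goal with H : nth _ a false = _ |- _ => rewrite H end;
  inr_simpl; position_facts v l1 l2; try lra; try (unfold edge_time; field; lra).
Qed.

Lemma root_fork_values w0 w1 a : nth (l1 - 1) a false = true -> nth l1 a false = true ->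
  move_value w0 w1 l1 false false GoL = w0 + w1 + root_left_value w0 w1 /\
  move_value w0 w1 l1 false false GoR = w0 + w1 + root_right_value w0 w1 /\
  best_next w0 w1 l1 false false a = w0 + w1 + (root_left_value w0 w1 + root_right_value w0 w1) / 2.
Proof.
  intros HaL HaR. unfold move_value, best_next, potential, unfound_weight.
  rewrite HaL, HaR, Nat.ltb_irrefl. cbn [step_pos edge_of is_move orb andb].
  unfold root_left_value, root_right_value. repeat split; nat_cases; inr_simpl;
  position_facts l1 l1 l2; try ring.
Qed.


(** A depth-first search passes through five phases; in each
    of them the set of traversed edges is an explicit interval determined by the position, and the
    outgoing edges still to explore depend only on the reduced state.  Consequently a depth-first
    strategy plays [greedy_move], except at the root fork or after both leaf edges are found. *)


Definition traversed (h : hist) (e : nat) : bool := mem_nat e (crossed l1 h).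

Definition left_open (h : hist) : bool :=
  let v := pos_after l1 h in (0 <? v)%nat && (v <=? l1)%nat && negb (traversed h (v - 1)).
Definition right_open (h : hist) : bool :=
  let v := pos_after l1 h in (l1 <=? v)%nat && (v <? L)%nat && negb (traversed h v).

Lemma untrav_out_open h :
  untrav_out L l1 h = (if left_open h then [GoL] else []) ++ (if right_open h then [GoR] else []).
Proof.
  unfold untrav_out, left_open, right_open, traversed, outgoing. cbv zeta.
  generalize (pos_after l1 h) as v. intros v.
  nat_cases; cbn [filter edge_of];
  repeat match goal with |- context [(?a <=? ?b)%nat] => destruct (Nat.leb_spec a b); try lia end;
  cbn [andb]; try (subst v);
  repeat match goal with |- context [mem_nat ?e (crossed l1 h)] =>
    destruct (mem_nat e (crossed l1 h)) end;
  reflexivity.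
Qed.

Lemma active_untrav_out_open h a : active_untrav_out L l1 h a =
  (if left_open h && nth (pos_after l1 h - 1) a false then [GoL] else []) ++
  (if right_open h && nth (pos_after l1 h) a false then [GoR] else []).
Proof.
  unfold active_untrav_out. rewrite untrav_out_open. unfold left_open, right_open. cbv zeta.
  generalize (pos_after l1 h) as v. intros v.
  destruct ((0 <? v)%nat) eqn:E1; destruct (v <=? l1)%nat; destruct (traversed h (v - 1));
  destruct (l1 <=? v)%nat; destruct (v <? L)%nat eqn:E2; destruct (traversed h v);
  cbn [andb negb app filter]; unfold feasb, edge_active; rewrite ?E1, ?E2; cbn [andb app filter];
  repeat match goal with |- context [nth ?j a false] => destruct (nth j a false) end; reflexivity.
Qed.

Lemma dfs_behaviour s h a x : is_DFS L l1 s -> s h a x <> 0 ->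
  let v := pos_after l1 h in
  let aL := nth (v - 1) a false in
  let aR := nth v a false in
  (left_open h && aL = true /\ x = GoL) \/ (right_open h && aR = true /\ x = GoR) \/
  (left_open h && aL = false /\ right_open h && aR = false /\
     left_open h || right_open h = true /\ x = Wait) \/
  (left_open h = false /\ right_open h = false /\
    ((v = l1 /\ x = Wait) \/
     ((v < l1)%nat /\ ((feasb L a v GoR = true /\ x = GoR) \/ (feasb L a v GoR = false /\ x = Wait))) \/
     ((l1 < v)%nat /\ ((feasb L a v GoL = true /\ x = GoL) \/ (feasb L a v GoL = false /\ x = Wait))))).
Proof.
  intros [Hval HDh] Hx. cbv zeta. specialize (HDh h a). cbv zeta in HDh.
  destruct HDh as [D1 [D2 D3]]. rewrite active_untrav_out_open in D1, D2.
  rewrite untrav_out_open in D2, D3.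
  pose proof (s_support_single L l1 s Hval h a x) as Single.
  assert (InUA : forall l, (l <> [] -> forall y, act_mem y l = false -> s h a y = 0) ->
    l <> [] -> act_mem x l = true).
  { intros l D Hne. destruct (act_mem x l) eqn:E; [reflexivity|]. exfalso. apply Hx, D; auto. }
  destruct (left_open h && nth (pos_after l1 h - 1) a false) eqn:EL.
  - specialize (InUA _ D1 ltac:(intro Hnil; simpl in Hnil; discriminate)).
    destruct (right_open h && nth (pos_after l1 h) a false); destruct x; simpl in InUA;
      try discriminate; auto.
  - destruct (right_open h && nth (pos_after l1 h) a false) eqn:ER.
    + specialize (InUA _ D1 ltac:(intro Hnil; simpl in Hnil; discriminate)).
      destruct x; simpl in InUA; try discriminate; auto.
    + destruct (left_open h || right_open h) eqn:EU.
      * right; right; left. repeat split; auto. apply Single; [|exact Hx].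
        apply D2; [reflexivity|].
        destruct (left_open h), (right_open h); simpl in *; discriminate.
      * right; right; right. apply orb_false_iff in EU. destruct EU as [E1 E2].
        rewrite E1, E2 in D3. specialize (D3 eq_refl).
        split; auto. split; auto. unfold back in D3.
        destruct (Nat.eqb_spec (pos_after l1 h) l1); [left; auto|].
        destruct (Nat.ltb_spec (pos_after l1 h) l1); [right; left|right; right];
          (split; [lia|]); destruct D3 as [F1 F2];
          match type of F1 with feasb _ _ _ ?b = true -> _ =>
            destruct (feasb L a (pos_after l1 h) b); [left|right]; auto end.
Qed.

(* The five phases of a depth-first search, described by the position [v] and the predicate [cr]
   of traversed edges: exploring the left branch first; exploring the right branch first; left
   leaf found (returning to the root, then exploring the right branch); right leaf found;
   everything traversed. *)
Definition dfs_phase (v : nat) (cr : nat -> bool) : Prop :=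
  ((1 <= v <= l1)%nat /\ forall e, cr e = true <-> (v <= e < l1)%nat) \/
  ((l1 < v <= L - 1)%nat /\ forall e, cr e = true <-> (l1 <= e < v)%nat) \/
  ((v <= L - 1)%nat /\ forall e, cr e = true <-> (e < Nat.max v l1)%nat) \/
  ((1 <= v <= L)%nat /\ forall e, cr e = true <-> (Nat.min v l1 <= e < L)%nat) \/
  ((v <= L)%nat /\ forall e, cr e = true <-> (e < L)%nat).

Lemma dfs_phase_ext v f g : (forall e, f e = g e) -> dfs_phase v f -> dfs_phase v g.
Proof.
  intros H HI. unfold dfs_phase in *.
  destruct HI as [[Hb Hcr]|[[Hb Hcr]|[[Hb Hcr]|[[Hb Hcr]|[Hb Hcr]]]]];
  [left|right;left|right;right;left|right;right;right;left|right;right;right;right];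
  (split; [exact Hb|]); intros e; rewrite <- H; apply Hcr.
Qed.

Lemma dfs_phase_init : dfs_phase l1 (fun e => mem_nat e []).
Proof. left. split; [lia|]. intros e. simpl. split; intros H; [discriminate|lia]. Qed.

Lemma dfs_phase_consistent v cr : dfs_phase v cr -> consistent_state v (cr 0%nat) (cr (L - 1)%nat).
Proof.
  unfold consistent_state; intros [[Hb Hcr]|[[Hb Hcr]|[[Hb Hcr]|[[Hb Hcr]|[Hb Hcr]]]]];
  (split; [lia|split]); intros E;
  first [ apply Hcr; lia | exfalso; lia ].
Qed.

(* in every phase, an outgoing edge is open iff the leaf edge on its side is unfound *)
Lemma dfs_phase_open v cr : dfs_phase v cr ->
  (0 <? v)%nat && (v <=? l1)%nat && negb (cr (v - 1)%nat) =
    (0 <? v)%nat && (v <=? l1)%nat && negb (cr 0%nat) /\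
  (l1 <=? v)%nat && (v <? L)%nat && negb (cr v) =
    (l1 <=? v)%nat && (v <? L)%nat && negb (cr (L - 1)%nat).
Proof.
  intros HI. split;
  (destruct (Nat.ltb_spec 0 v); destruct (Nat.leb_spec v l1); destruct (Nat.leb_spec l1 v);
   destruct (Nat.ltb_spec v L); cbn [andb]; try reflexivity; f_equal;
   destruct HI as [[Hb Hcr]|[[Hb Hcr]|[[Hb Hcr]|[[Hb Hcr]|[Hb Hcr]]]]];
   apply eq_true_iff_eq; rewrite !Hcr; lia).
Qed.

Lemma dfs_support s h a x : is_DFS L l1 s -> dfs_phase (pos_after l1 h) (traversed h) ->
  s h a x <> 0 ->
  let v := pos_after l1 h in
  let c0 := traversed h 0 in
  let c1 := traversed h (L - 1) in
  c0 && c1 = true \/ (root_fork v c0 c1 a = true /\ x <> Wait) \/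
  x = greedy_move v c0 c1 a.
Proof.
  intros HD HI Hx. pose proof (dfs_behaviour s h a x HD Hx) as B.
  destruct (dfs_phase_consistent _ _ HI) as [HvL [H0 HL]].
  destruct (dfs_phase_open _ _ HI) as [OL OR].
  unfold left_open, right_open in B. cbv zeta in *. rewrite OL, OR in B. clear HI OL OR.
  unfold greedy_move, root_fork, feasb, edge_active in *.
  set (v := pos_after l1 h) in *. clearbody v.
  destruct (traversed h 0), (traversed h (L - 1)); cbn [andb negb] in *; auto; right;
  destruct (Nat.ltb_spec 0 v); destruct (Nat.leb_spec v l1); destruct (Nat.leb_spec l1 v);
  destruct (Nat.ltb_spec v L); destruct (Nat.ltb_spec v l1); destruct (Nat.ltb_spec l1 v);
  destruct (Nat.eqb_spec v l1); try lia; try subst v;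
  repeat match goal with |- context [nth ?j a false] => destruct (nth j a false) end;
  cbn [andb orb negb] in *;
  destruct B as [[B1 ->]|[[B1 ->]|[[B1 [B2 [B3 ->]]]|
    [B1 [B2 [[B3 ->]|[[B3 [[B4 ->]|[B4 ->]]]|[B3 [[B4 ->]|[B4 ->]]]]]]]]]];
  try discriminate; try lia; auto; left; split; auto; discriminate.
Qed.

Ltac phase_facts Hcr :=
  repeat match goal with
  | H : (_ && _) = true |- _ => apply andb_prop in H; destruct H
  | H : (_ || _) = true |- _ => apply orb_true_iff in H; destruct H
  | H : _ = true \/ _ |- _ => destruct H
  | H : (_ <? _)%nat = true |- _ => apply Nat.ltb_lt in H
  | H : ?cr ?e = true |- _ => apply Hcr in H
  | H : ?cr ?e = false |- _ => rewrite <- not_true_iff_false, Hcr in H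
  end.

Ltac phase_goal Hcr :=
  let solve_iff := (let e := fresh "e" in intro e; cbv beta;
    rewrite ?orb_false_r, ?orb_true_iff, ?Nat.eqb_eq, Hcr; lia) in
  unfold dfs_phase; cbn [step_pos is_move andb edge_of];
  first [ left; split; [lia | solve_iff]
        | right; left; split; [lia | solve_iff]
        | right; right; left; split; [lia | solve_iff]
        | right; right; right; left; split; [lia | solve_iff]
        | right; right; right; right; split; [lia | solve_iff] ].

Lemma dfs_direction v c0 c1 a x : consistent_state v c0 c1 ->
  (c0 && c1 = true \/ (root_fork v c0 c1 a = true /\ x <> Wait) \/
   x = greedy_move v c0 c1 a) ->
  (x = GoL -> c0 && c1 = true \/ (c0 = false /\ (c1 = true \/ (v <= l1)%nat))) /\
  (x = GoR -> c0 && c1 = true \/ (c1 = false /\ (c0 = true \/ (l1 <= v)%nat))).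
Proof.
  intros [HvL [H0 HL]] [Hdone|[[Hfork Hnw]| ->]].
  - split; intros; left; exact Hdone.
  - unfold root_fork in Hfork. destruct (Nat.eqb_spec v l1); [|discriminate].
    destruct c0, c1; cbn in Hfork; try discriminate.
    split; intros; right; split; auto; lia.
  - unfold greedy_move, feasb, edge_active. destruct c0, c1; [split; intros; left; reflexivity|..];
    nat_cases; repeat match goal with |- context [nth ?j a false] => destruct (nth j a false) end;
    cbn; split; intros E; try discriminate; right; split; auto; lia.
Qed.

Lemma dfs_phase_step v cr a x : dfs_phase v cr -> feasb L a v x = true ->
  (cr 0%nat && cr (L - 1)%nat = true \/
   (root_fork v (cr 0%nat) (cr (L - 1)%nat) a = true /\ x <> Wait) \/
   x = greedy_move v (cr 0%nat) (cr (L - 1)%nat) a) ->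
  dfs_phase (step_pos v x) (fun e => cr e || is_move x && (e =? edge_of v x)%nat).
Proof.
  intros HI Hf Hx.
  destruct (dfs_direction v _ _ a x (dfs_phase_consistent v cr HI) Hx) as [DL DR].
  destruct x; cbn [feasb] in Hf.
  - apply (dfs_phase_ext v cr); [|exact HI]. intros e. simpl. rewrite orb_false_r. reflexivity.
  - apply andb_prop in Hf as [Hv _]. apply Nat.ltb_lt in Hv.
    destruct (DL eq_refl) as [Hd|[Hc0 Hc1]];
    destruct HI as [[Hb Hcr]|[[Hb Hcr]|[[Hb Hcr]|[[Hb Hcr]|[Hb Hcr]]]]]; phase_facts Hcr; try lia;
    first [ phase_goal Hcr
          | destruct (Nat.eq_dec v 1); phase_goal Hcr
          | destruct (Nat.eq_dec v l1); phase_goal Hcr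
          | destruct (Nat.eq_dec v (l1 + 1)); phase_goal Hcr ].
  - apply andb_prop in Hf as [Hv _]. apply Nat.ltb_lt in Hv.
    destruct (DR eq_refl) as [Hd|[Hc1 Hc0]];
    destruct HI as [[Hb Hcr]|[[Hb Hcr]|[[Hb Hcr]|[[Hb Hcr]|[Hb Hcr]]]]]; phase_facts Hcr; try lia;
    first [ phase_goal Hcr
          | destruct (Nat.eq_dec (v + 1) L); phase_goal Hcr
          | destruct (Nat.eq_dec v l1); phase_goal Hcr
          | destruct (Nat.eq_dec (v + 1) l1); phase_goal Hcr ].
Qed.


(** The cost of a stage is the weight of the unfound leaf edges;
    in expectation the potential drops by at most this cost at every stage, whatever the searcher
    does (for the weights of eps* ), and by exactly this cost under a depth-first strategy. *)

Definition hist_potential (w0 w1 : R) (h : hist) : R :=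
  potential w0 w1 (pos_after l1 h) (traversed h 0) (traversed h (L - 1)).
Definition hist_weight (w0 w1 : R) (h : hist) : R :=
  unfound_weight w0 w1 (traversed h 0) (traversed h (L - 1)).
Definition hist_consistent (h : hist) : Prop :=
  consistent_state (pos_after l1 h) (traversed h 0) (traversed h (L - 1)).
Definition hist_phase (h : hist) : Prop := dfs_phase (pos_after l1 h) (traversed h).

Lemma traversed_snoc h a x e : traversed (h ++ [(a, x)]) e =
  traversed h e || is_move x && (e =? edge_of (pos_after l1 h) x)%nat.
Proof. apply crossed_snoc. Qed.

Lemma move_value_snoc w0 w1 h a x :
  move_value w0 w1 (pos_after l1 h) (traversed h 0) (traversed h (L - 1)) x =
  hist_weight w0 w1 h + hist_potential w0 w1 (h ++ [(a, x)]).
Proof.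
  unfold move_value, hist_weight, hist_potential. rewrite pos_after_snoc, !traversed_snoc.
  reflexivity.
Qed.

Lemma next_exp_potential s w0 w1 h : valid_strategy L l1 s ->
  next_exp L p s (hist_potential w0 w1) h =
  lsum (all_cfgs L) (fun a => cfg_prob p a *
    (act_mean s h a (move_value w0 w1 (pos_after l1 h) (traversed h 0) (traversed h (L - 1)))
     - hist_weight w0 w1 h)).
Proof.
  intros Hs. unfold next_exp. apply lsum_ext. intros a _. f_equal.
  replace (act_mean s h a (move_value w0 w1 (pos_after l1 h) (traversed h 0) (traversed h (L - 1))))
    with (act_mean s h a (fun x => hist_weight w0 w1 h + hist_potential w0 w1 (h ++ [(a, x)])))
    by (unfold act_mean; rewrite !(move_value_snoc w0 w1 h a); reflexivity).
  rewrite (act_mean_plus_const L l1 s Hs). ring.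
Qed.

Lemma hist_consistent_reach s : valid_strategy L l1 s ->
  forall h, hist_prob p s h <> 0 -> hist_consistent h.
Proof.
  intros Hs. apply (support_ind p s).
  - unfold hist_consistent, consistent_state, traversed. simpl. split; [lia|]. split; intros; lia.
  - intros h a x [HvL [H0 HL]] Hx. pose proof (s_feasible L l1 s Hs h a x Hx) as Hf.
    unfold hist_consistent, consistent_state. rewrite pos_after_snoc, !traversed_snoc.
    destruct x; cbn [step_pos is_move andb edge_of feasb] in *.
    + rewrite !orb_false_r. auto.
    + apply andb_prop in Hf as [Hv _]. apply Nat.ltb_lt in Hv.
      split; [lia|]. split; intros E; [|lia].
      replace (0 =? pos_after l1 h - 1)%nat with true by (symmetry; apply Nat.eqb_eq; lia).
      apply orb_true_r.
    + apply andb_prop in Hf as [Hv _]. apply Nat.ltb_lt in Hv.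
      split; [lia|]. split; intros E; [lia|].
      replace (L - 1 =? pos_after l1 h)%nat with true by (symmetry; apply Nat.eqb_eq; lia).
      apply orb_true_r.
Qed.

Lemma hist_phase_reach s : is_DFS L l1 s -> forall h, hist_prob p s h <> 0 -> hist_phase h.
Proof.
  intros HD. apply (support_ind p s).
  - apply (dfs_phase_ext l1 (fun e => mem_nat e [])); [reflexivity|]. apply dfs_phase_init.
  - intros h a x HI Hx. unfold hist_phase. rewrite pos_after_snoc.
    apply (dfs_phase_ext _
      (fun e => traversed h e || is_move x && (e =? edge_of (pos_after l1 h) x)%nat)).
    + intros e. symmetry. apply traversed_snoc.
    + apply (dfs_phase_step _ _ a); auto.
      * apply (s_feasible L l1 s (proj1 HD) h a x Hx).
      * apply (dfs_support s); auto.
Qed.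

Lemma potential_step_lb s h : valid_strategy L l1 s -> hist_consistent h ->
  hist_potential (INR l1) (INR l2) h - hist_weight (INR l1) (INR l2) h <=
  next_exp L p s (hist_potential (INR l1) (INR l2)) h.
Proof.
  intros Hs HJ. rewrite next_exp_potential by auto. unfold hist_potential at 1.
  rewrite <- (potential_bellman (INR l1) (INR l2) _ _ _ HJ), <- cfg_avg_minus.
  apply lsum_le. intros a _. apply Rmult_le_compat_l; [apply cfg_prob_nonneg; lra|].
  apply Rplus_le_compat_r, (act_mean_ge L l1 s Hs). intros x Hx.
  apply best_next_le_move; auto. apply (s_feasible L l1 s Hs h a x Hx).
Qed.

Definition fork_fair (s : strategy) : Prop :=
  forall h a, hist_phase h ->
  root_fork (pos_after l1 h) (traversed h 0) (traversed h (L - 1)) a = true ->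
  s h a GoL = s h a GoR.

(* a depth-first strategy realizes [best_next], provided the root fork is harmless: either the
   weights balance the two branches or the strategy is fair there *)
Lemma dfs_act_mean s w0 w1 h a : is_DFS L l1 s ->
  root_left_value w0 w1 = root_right_value w0 w1 \/ fork_fair s -> hist_phase h ->
  act_mean s h a (move_value w0 w1 (pos_after l1 h) (traversed h 0) (traversed h (L - 1))) =
  best_next w0 w1 (pos_after l1 h) (traversed h 0) (traversed h (L - 1)) a.
Proof.
  intros HD Htie HI. pose proof (proj1 HD) as Hs.
  pose proof (dfs_phase_consistent _ _ HI) as HJ.
  pose proof (dfs_support s h a) as Hsupp. cbv zeta in Hsupp.
  destruct (root_fork (pos_after l1 h) (traversed h 0) (traversed h (L - 1)) a) eqn:Fk.
  - assert (Fk' := Fk). unfold root_fork in Fk'.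
    destruct (Nat.eqb_spec (pos_after l1 h) l1) as [Hv|]; [|discriminate].
    destruct (traversed h 0) eqn:C0, (traversed h (L - 1)) eqn:C1; try discriminate.
    cbn [andb negb] in Fk'. apply andb_prop in Fk' as [HaL HaR].
    rewrite Hv. destruct (root_fork_values w0 w1 a HaL HaR) as [VL [VR VB]].
    assert (Hw : s h a Wait = 0).
    { destruct (Req_dec (s h a Wait) 0) as [E|E]; auto. exfalso.
      destruct (Hsupp Wait HD HI E) as [Hd|[[_ Hw]|Hg]]; [discriminate|auto|].
      unfold greedy_move, feasb, edge_active in Hg. rewrite Hv, Nat.ltb_irrefl, HaL in Hg.
      replace (0 <? l1)%nat with true in Hg by (symmetry; apply Nat.ltb_lt; lia). discriminate. }
    destruct (Hs h a) as [_ [_ Hsum]].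
    unfold act_mean. rewrite Hw, VL, VR, VB.
    destruct Htie as [Hbal|Hfair].
    + rewrite Hbal. replace (s h a GoR) with (1 - s h a GoL) by lra. field.
    + specialize (Hfair h a HI). rewrite C0, C1 in Hfair. specialize (Hfair Fk).
      replace (s h a GoR) with (/ 2) by lra. replace (s h a GoL) with (/ 2) by lra. field.
  - apply (act_mean_eq L l1 s Hs). intros x Hx.
    destruct (Hsupp x HD HI Hx) as [Hd|[[Hf _]| ->]]; [|discriminate|apply greedy_move_value; auto].
    destruct (traversed h 0), (traversed h (L - 1)); try discriminate.
    unfold move_value, best_next, potential, unfound_weight. simpl. ring.
Qed.

Lemma potential_step_dfs s w0 w1 h : is_DFS L l1 s ->
  root_left_value w0 w1 = root_right_value w0 w1 \/ fork_fair s -> hist_phase h ->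
  next_exp L p s (hist_potential w0 w1) h = hist_potential w0 w1 h - hist_weight w0 w1 h.
Proof.
  intros HD Htie HI. rewrite next_exp_potential by exact (proj1 HD).
  unfold hist_potential at 1.
  rewrite <- (potential_bellman w0 w1 _ _ _ (dfs_phase_consistent _ _ HI)), <- cfg_avg_minus.
  apply lsum_ext. intros a _. rewrite dfs_act_mean; auto.
Qed.

Lemma unfound_weight_nonneg w0 w1 c0 c1 : 0 <= w0 -> 0 <= w1 -> 0 <= unfound_weight w0 w1 c0 c1.
Proof. intros. unfold unfound_weight. destruct c0, c1; lra. Qed.

Lemma unfound_weight_antitone w0 w1 c0 c1 b0 b1 : 0 <= w0 -> 0 <= w1 ->
  unfound_weight w0 w1 (c0 || b0) (c1 || b1) <= unfound_weight w0 w1 c0 c1.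
Proof. intros. unfold unfound_weight. destruct c0, c1, b0, b1; simpl; lra. Qed.

Lemma weighted_between w X M : 0 <= w -> 1 <= X -> X <= M -> w <= w * X <= w * M.
Proof. intros. split; nra. Qed.

Lemma potential_bounds w0 w1 v c0 c1 : 0 <= w0 -> 0 <= w1 -> consistent_state v c0 c1 ->
  unfound_weight w0 w1 c0 c1 <= potential w0 w1 v c0 c1 <=
  (w0 + w1) * (root_time + 2 * INR L * edge_time).
Proof.
  intros H0 H1 [HvL [Hv0 HvL2]].
  pose proof edge_time_ge1 as He; pose proof root_time_ge1 as Hr.
  set (e := edge_time) in *. set (M := root_time + 2 * INR L * e).
  assert (HL0 : 0 <= INR L) by apply pos_INR.
  assert (HvL' : INR v <= INR L) by (apply le_INR; lia).
  assert (HLe : INR L <= INR L * e) by nra.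
  assert (Hve : 0 <= INR v * e) by (apply Rmult_le_pos; [apply pos_INR|lra]).
  assert (HLM : INR L * e + INR L * e <= M) by (unfold M; lra).
  assert (0 <= w0 * M /\ 0 <= w1 * M) as [HM0 HM1] by (split; apply Rmult_le_pos; lra).
  unfold potential, unfound_weight. fold e. destruct c0, c1.
  - split; [lra|]. apply Rmult_le_pos; lra.
  - assert (v <> L) by (intro E; specialize (HvL2 E); discriminate).
    assert (1 <= INR L - INR v) by (rewrite <- minus_INR, <- INR_1 by lia; apply le_INR; lia).
    destruct (weighted_between w1 ((INR L - INR v) * e) M); auto; try nra.
  - assert (v <> 0%nat) by (intro E; specialize (Hv0 E); discriminate).
    assert (1 <= INR v) by (apply (le_INR 1); lia).
    destruct (weighted_between w0 (INR v * e) M); auto; try nra.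
  - assert (v <> L) by (intro E; specialize (HvL2 E); discriminate).
    assert (v <> 0%nat) by (intro E; specialize (Hv0 E); discriminate).
    assert (1 <= INR v) by (apply (le_INR 1); lia).
    assert (1 <= INR L - INR v) by (rewrite <- minus_INR, <- INR_1 by lia; apply le_INR; lia).
    assert (0 <= w1 * (INR L * e) /\ 0 <= w0 * (INR L * e)) as [A1 A0]
      by (split; apply Rmult_le_pos; lra).
    destruct (v <? l1)%nat; [|destruct (l1 <? v)%nat].
    + destruct (weighted_between (w0 + w1) (INR v * e + INR L * e) M); try nra.
    + destruct (weighted_between (w0 + w1) ((INR L - INR v) * e + INR L * e) M); try nra.
    + assert (0 <= (INR L - 1) * e) by (apply Rmult_le_pos; lra).
      destruct (weighted_between (w0 + w1) (root_time + (INR L - 1) * e) M); try (unfold M; nra).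
Qed.

Lemma weight_ge1_or_done v c0 c1 :
  1 <= unfound_weight (INR l1) (INR l2) c0 c1 \/
  (unfound_weight (INR l1) (INR l2) c0 c1 = 0 /\ potential (INR l1) (INR l2) v c0 c1 = 0).
Proof.
  assert (1 <= INR l1) by (apply (le_INR 1); lia). assert (1 <= INR l2) by (apply (le_INR 1); lia).
  unfold unfound_weight, potential. destruct c0, c1; [right; split; lra|left; lra..].
Qed.

Lemma weight_step_le s w0 w1 h : valid_strategy L l1 s -> 0 <= w0 -> 0 <= w1 ->
  next_exp L p s (hist_weight w0 w1) h <= hist_weight w0 w1 h.
Proof.
  intros Hs H0 H1. unfold next_exp. rewrite <- (cfg_avg_const p L (hist_weight w0 w1 h)).
  apply lsum_le. intros a _. apply Rmult_le_compat_l; [apply cfg_prob_nonneg; lra|].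
  apply (act_mean_le L l1 s Hs). intros x _. unfold hist_weight. rewrite !traversed_snoc.
  apply unfound_weight_antitone; auto.
Qed.

(* with probability (1-p)^L no edge is active, and then nothing is found during the stage *)
Lemma weight_step_ge s w0 w1 h : valid_strategy L l1 s -> 0 <= w0 -> 0 <= w1 ->
  (1 - p) ^ L * hist_weight w0 w1 h <= next_exp L p s (hist_weight w0 w1) h.
Proof.
  intros Hs H0 H1. unfold next_exp.
  set (none := repeat false L).
  assert (E : act_mean s h none (fun x => hist_weight w0 w1 (h ++ [(none, x)])) =
              hist_weight w0 w1 h).
  { apply (act_mean_eq L l1 s Hs). intros x Hx. pose proof (s_feasible L l1 s Hs h none x Hx) as Hf.
    destruct x; cbn [feasb] in Hf; unfold edge_active, none in Hf; rewrite ?nth_repeat_false in Hf;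
      rewrite ?andb_false_r in Hf; try discriminate.
    unfold hist_weight. rewrite !traversed_snoc. cbn [is_move andb]. rewrite !orb_false_r.
    reflexivity. }
  rewrite <- (cfg_prob_all_inactive p L). fold none. rewrite <- E.
  apply (lsum_ge_term _ (fun a => cfg_prob p a * act_mean s h a (fun x => hist_weight w0 w1 (h ++ [(a, x)]))) none).
  - apply all_inactive_in.
  - intros a _. apply Rmult_le_pos; [apply cfg_prob_nonneg; lra|].
    apply (act_mean_ge L l1 s Hs). intros. apply unfound_weight_nonneg; auto.
Qed.

(* at p = 1 the Bellman inequality holds at every step of the support, not only on average *)
Lemma potential_step_lb_p1 s h x : p = 1 -> valid_strategy L l1 s -> hist_consistent h ->
  s h (repeat true L) x <> 0 ->
  hist_potential (INR l1) (INR l2) h - hist_weight (INR l1) (INR l2) h <=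
  hist_potential (INR l1) (INR l2) (h ++ [(repeat true L : cfg, x)]).
Proof.
  intros Hp1 Hs HJ Hx. unfold hist_potential at 1.
  rewrite <- (potential_bellman (INR l1) (INR l2) _ _ _ HJ), cfg_avg_p1 by exact Hp1.
  pose proof (best_next_le_move _ _ _ _ x HJ (s_feasible L l1 s Hs h _ x Hx)) as Hle.
  rewrite (move_value_snoc _ _ h (repeat true L)) in Hle. lra.
Qed.

(** Iterating the one-step relations gives an exact formula for depth-first strategies and
    a lower bound for all strategies; the error terms are controlled by the decay of the weight. *)

Definition expected_cost (s : strategy) (w0 w1 : R) (m : nat) : R :=
  rsum (fun t => Ex L p s t (hist_weight w0 w1)) m.

Notation psi0 := (hist_potential (INR l1) (INR l2) []).

Lemma Ex_potential_lb s t : valid_strategy L l1 s ->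
  Ex L p s t (hist_potential (INR l1) (INR l2)) <=
  Ex L p s t (hist_weight (INR l1) (INR l2)) + Ex L p s (S t) (hist_potential (INR l1) (INR l2)).
Proof.
  intros Hs. rewrite Ex_S.
  assert (Ex L p s t (fun h => hist_potential (INR l1) (INR l2) h - hist_weight (INR l1) (INR l2) h)
          <= Ex L p s t (next_exp L p s (hist_potential (INR l1) (INR l2)))).
  { apply (Ex_mono L l1 p Hp01 s Hs). intros h Hh.
    apply potential_step_lb; auto. apply (hist_consistent_reach s Hs h Hh). }
  rewrite Ex_minus in H. lra.
Qed.

Lemma expected_cost_lb_tail s m : valid_strategy L l1 s ->
  psi0 <= expected_cost s (INR l1) (INR l2) m + Ex L p s m (hist_potential (INR l1) (INR l2)).
Proof.
  intros Hs. induction m.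
  - rewrite Ex_0. unfold expected_cost. change (rsum _ 0) with 0. lra.
  - unfold expected_cost in *. rewrite rsum_S. pose proof (Ex_potential_lb s m Hs). lra.
Qed.

Lemma expected_cost_dfs_tail s w0 w1 m : is_DFS L l1 s ->
  root_left_value w0 w1 = root_right_value w0 w1 \/ fork_fair s ->
  hist_potential w0 w1 [] = expected_cost s w0 w1 m + Ex L p s m (hist_potential w0 w1).
Proof.
  intros HD Htie. induction m.
  - rewrite Ex_0. unfold expected_cost. change (rsum _ 0) with 0. ring.
  - unfold expected_cost in *. rewrite rsum_S, Ex_S.
    rewrite (Ex_ext L l1 p Hp01 s (proj1 HD) m (next_exp L p s (hist_potential w0 w1))
      (fun h => hist_potential w0 w1 h - hist_weight w0 w1 h)).
    + rewrite Ex_minus. lra.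
    + intros h Hh. apply potential_step_dfs; auto. apply (hist_phase_reach s HD h Hh).
Qed.

Lemma Ex_weight_nonincreasing s w0 w1 t : valid_strategy L l1 s -> 0 <= w0 -> 0 <= w1 ->
  Ex L p s (S t) (hist_weight w0 w1) <= Ex L p s t (hist_weight w0 w1).
Proof.
  intros Hs H0 H1. rewrite Ex_S. apply (Ex_mono L l1 p Hp01 s Hs). intros h _.
  apply weight_step_le; auto.
Qed.

Lemma Ex_weight_geometric s w0 w1 n : valid_strategy L l1 s -> 0 <= w0 -> 0 <= w1 ->
  ((1 - p) ^ L) ^ n * (w0 + w1) <= Ex L p s n (hist_weight w0 w1).
Proof.
  intros Hs H0 H1. induction n.
  - rewrite Ex_0. unfold hist_weight, unfound_weight, traversed. simpl. lra.
  - assert (Hq : 0 <= (1 - p) ^ L) by (apply pow_le; lra).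
    assert ((1 - p) ^ L * Ex L p s n (hist_weight w0 w1) <= Ex L p s (S n) (hist_weight w0 w1)).
    { rewrite Ex_S, <- Ex_scal. apply (Ex_mono L l1 p Hp01 s Hs). intros h _.
      apply weight_step_ge; auto. }
    simpl. assert (Hmul := Rmult_le_compat_l _ _ _ Hq IHn). nra.
Qed.

Lemma expected_cost_dfs_ub s w0 w1 n : is_DFS L l1 s ->
  root_left_value w0 w1 = root_right_value w0 w1 \/ fork_fair s -> 0 <= w0 -> 0 <= w1 ->
  expected_cost s w0 w1 n <= hist_potential w0 w1 [] - ((1 - p) ^ L) ^ n * (w0 + w1).
Proof.
  intros HD Htie H0 H1. pose proof (proj1 HD) as Hs.
  rewrite (expected_cost_dfs_tail s w0 w1 n HD Htie).
  assert (Ex L p s n (hist_weight w0 w1) <= Ex L p s n (hist_potential w0 w1)).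
  { apply (Ex_mono L l1 p Hp01 s Hs). intros h Hh.
    apply potential_bounds; auto. apply dfs_phase_consistent, (hist_phase_reach s HD h Hh). }
  pose proof (Ex_weight_geometric s w0 w1 n Hs H0 H1). lra.
Qed.

Definition cost_factor : R := INR L * (root_time + 2 * INR L * edge_time).

Lemma potential_le_weight h : hist_consistent h ->
  hist_potential (INR l1) (INR l2) h <= cost_factor * hist_weight (INR l1) (INR l2) h.
Proof.
  intros HJ. unfold hist_potential, hist_weight, cost_factor.
  destruct (potential_bounds (INR l1) (INR l2) _ _ _ (pos_INR _) (pos_INR _) HJ) as [_ Hub].
  rewrite <- plus_INR in Hub.
  assert (0 <= INR L * (root_time + 2 * INR L * edge_time)).
  { pose proof edge_time_ge1; pose proof root_time_ge1. pose proof (pos_INR L).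
    apply Rmult_le_pos; auto. nra. }
  destruct (weight_ge1_or_done (pos_after l1 h) (traversed h 0) (traversed h (L - 1)))
    as [HW|[HW HP]]; [nra|]. rewrite HW, HP. lra.
Qed.

Lemma expected_cost_approaches s X : valid_strategy L l1 s -> X < psi0 ->
  exists m, X <= expected_cost s (INR l1) (INR l2) m.
Proof.
  intros Hs HX.
  set (e := fun t => Ex L p s t (hist_weight (INR l1) (INR l2))).
  set (d := psi0 - X). assert (Hd : 0 < d) by (unfold d; lra).
  assert (HK : 0 < cost_factor).
  { unfold cost_factor. pose proof edge_time_ge1; pose proof root_time_ge1.
    assert (1 <= INR L) by (apply (le_INR 1); lia). apply Rmult_lt_0_compat; nra. }
  assert (He0 : forall t, 0 <= e t).
  { intros t. apply (Ex_nonneg L l1 p Hp01 s Hs). intros h _.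
    apply unfound_weight_nonneg; apply pos_INR. }
  assert (He1 : forall t, e (S t) <= e t)
    by (intros t; apply Ex_weight_nonincreasing; auto; apply pos_INR).
  destruct (exists_nat_ge (cost_factor * psi0 / d)) as [m Hm]. exists m.
  pose proof (expected_cost_lb_tail s m Hs) as HT.
  pose proof (rsum_nonincreasing_lb e m He0 He1) as HS.
  assert (Htail : Ex L p s m (hist_potential (INR l1) (INR l2)) <= cost_factor * e m).
  { unfold e. rewrite <- Ex_scal. apply (Ex_mono L l1 p Hp01 s Hs). intros h Hh.
    apply potential_le_weight, (hist_consistent_reach s Hs h Hh). }
  unfold expected_cost in *. fold e in HT, HS |- *.
  destruct (Rle_dec (cost_factor * e m) d); [unfold d in *; lra|].
  assert (Hmd : cost_factor * psi0 <= INR m * d).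
  { apply (Rmult_le_compat_r d) in Hm; [|lra]. unfold Rdiv in Hm.
    rewrite Rmult_assoc, Rinv_l, Rmult_1_r in Hm by lra. exact Hm. }
  assert (INR m * d <= INR m * (cost_factor * e m)) by (apply Rmult_le_compat_l; [apply pos_INR|lra]).
  assert (psi0 <= INR m * e m) by (apply (Rmult_le_reg_l cost_factor); auto; nra).
  unfold d in *. lra.
Qed.

(* When p = 1 the depth-first bound has no slack, so an approximate lower bound does not suffice;
   but then the Bellman inequality holds at every step of the support, and the potential truncated
   at level k loses at most the stage cost per stage. *)
Definition truncated_potential (k : nat) (h : hist) : R :=
  Rmin (hist_potential (INR l1) (INR l2) h) (INR k).

Lemma Rmin_step (psi W psi' k : R) : 0 <= k -> psi - W <= psi' ->
  1 <= W \/ (W = 0 /\ psi = 0) -> Rmin psi (k + 1) - W <= Rmin psi' k.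
Proof. intros Hk Hstep HW. unfold Rmin. repeat destruct Rle_dec; lra. Qed.

Lemma truncated_step s h k : p = 1 -> valid_strategy L l1 s -> hist_consistent h ->
  truncated_potential (S k) h - hist_weight (INR l1) (INR l2) h <=
  next_exp L p s (truncated_potential k) h.
Proof.
  intros Hp1 Hs HJ. unfold next_exp. rewrite cfg_avg_p1 by exact Hp1.
  apply (act_mean_ge L l1 s Hs). intros x Hx. unfold truncated_potential. rewrite S_INR.
  apply Rmin_step; [apply pos_INR|apply (potential_step_lb_p1 s); auto|].
  apply weight_ge1_or_done.
Qed.

Lemma expected_cost_truncated s n k : p = 1 -> valid_strategy L l1 s ->
  truncated_potential (n + k) [] <=
  expected_cost s (INR l1) (INR l2) n + Ex L p s n (truncated_potential k).
Proof.
  intros Hp1 Hs. revert k. induction n; intros k.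
  - rewrite Ex_0. unfold expected_cost. change (rsum _ 0) with 0. simpl. lra.
  - replace (S n + k)%nat with (n + S k)%nat by lia.
    unfold expected_cost in *. rewrite rsum_S. specialize (IHn (S k)).
    assert (Ex L p s n (fun h => truncated_potential (S k) h - hist_weight (INR l1) (INR l2) h)
            <= Ex L p s (S n) (truncated_potential k)).
    { rewrite Ex_S. apply (Ex_mono L l1 p Hp01 s Hs). intros h Hh.
      apply truncated_step; auto. apply (hist_consistent_reach s Hs h Hh). }
    rewrite Ex_minus in H. lra.
Qed.

Lemma expected_cost_reaches_p1 s : p = 1 -> valid_strategy L l1 s ->
  exists m, psi0 <= expected_cost s (INR l1) (INR l2) m.
Proof.
  intros Hp1 Hs. destruct (exists_nat_ge psi0) as [m Hm]. exists m.
  pose proof (expected_cost_truncated s m 0 Hp1 Hs) as H.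
  rewrite Nat.add_0_r in H. unfold truncated_potential at 1 in H. rewrite Rmin_left in H by lra.
  rewrite (Ex_ext L l1 p Hp01 s Hs m _ (fun _ => 0 * 0)), Ex_scal in H; [lra|].
  intros h Hh. unfold truncated_potential. rewrite Rmin_right; [simpl; ring|].
  destruct (potential_bounds (INR l1) (INR l2) _ _ _ (pos_INR _) (pos_INR _)
    (hist_consistent_reach s Hs h Hh)) as [Hlb _].
  pose proof (unfound_weight_nonneg (INR l1) (INR l2) (traversed h 0) (traversed h (L - 1))
    (pos_INR _) (pos_INR _)). simpl. unfold hist_potential. lra.
Qed.

Lemma expected_cost_lb s n : valid_strategy L l1 s ->
  exists m, psi0 - ((1 - p) ^ L) ^ n * INR L <= expected_cost s (INR l1) (INR l2) m.
Proof.
  intros Hs. destruct (Req_dec p 1) as [E|E].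
  - destruct (expected_cost_reaches_p1 s E Hs) as [m Hm]. exists m.
    assert (0 <= ((1 - p) ^ L) ^ n) by (apply pow_le, pow_le; lra).
    pose proof (pos_INR L). nra.
  - apply expected_cost_approaches; auto.
    assert (0 < ((1 - p) ^ L) ^ n) by (apply pow_lt, pow_lt; lra).
    assert (0 < INR L) by (apply lt_0_INR; lia). nra.
Qed.

(** The survival probability of an edge is the expectation of the
    indicator that it is still untraversed, so against eps* the partial payoff is the expected cost
    divided by L. *)

Lemma surv_as_Ex s e t :
  surv L l1 p s e t = Ex L p s t (fun h => if traversed h e then 0 else 1).
Proof. unfold surv, Ex. rewrite fold_map_lsum. apply lsum_ext. intros h _. reflexivity. Qed.

Lemma expected_cost_split s w0 w1 n : expected_cost s w0 w1 n =
  w0 * rsum (fun t => surv L l1 p s 0 t) n + w1 * rsum (fun t => surv L l1 p s (L - 1) t) n.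
Proof.
  unfold expected_cost. rewrite <- !rsum_scal, <- rsum_plus. apply rsum_ext. intros t _.
  rewrite !surv_as_Ex, <- !Ex_scal, <- Ex_plus. unfold Ex. apply lsum_ext. intros h _.
  unfold hist_weight, unfound_weight. destruct (traversed h 0), (traversed h (L - 1)); ring.
Qed.

Lemma payoff_eps_star s n :
  partial_payoff L l1 p s (eps_star l1 l2) n = / INR L * expected_cost s (INR l1) (INR l2) n.
Proof.
  unfold partial_payoff. rewrite rsum_endpoints; [ | lia | ].
  - rewrite expected_cost_split. unfold eps_star.
    replace ((L - 1 =? 0)%nat) with false by (symmetry; apply Nat.eqb_neq; lia).
    rewrite !Nat.eqb_refl. simpl (0 =? 0)%nat. cbv iota.
    assert (INR L <> 0) by (apply not_0_INR; lia). field. auto.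
  - intros i Hi. unfold eps_star.
    replace ((i =? 0)%nat) with false by (symmetry; apply Nat.eqb_neq; lia).
    replace ((i =? L - 1)%nat) with false by (symmetry; apply Nat.eqb_neq; lia). ring.
Qed.

Lemma initial_potential w0 w1 :
  hist_potential w0 w1 [] = (w0 + w1) * (root_time + (INR L - 1) * edge_time).
Proof.
  unfold hist_potential, potential, traversed. simpl (pos_after l1 []). simpl (crossed l1 []).
  unfold mem_nat. simpl existsb. rewrite Nat.ltb_irrefl. reflexivity.
Qed.

Lemma dfs_best_response s s' n : is_DFS L l1 s -> valid_strategy L l1 s' ->
  exists m, partial_payoff L l1 p s (eps_star l1 l2) n <= partial_payoff L l1 p s' (eps_star l1 l2) m.
Proof.
  intros HD Hs'. destruct (expected_cost_lb s' n Hs') as [m Hm]. exists m.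
  rewrite !payoff_eps_star. apply Rmult_le_compat_l.
  - left. apply Rinv_0_lt_compat, lt_0_INR. lia.
  - eapply Rle_trans; [|exact Hm]. rewrite plus_INR.
    apply expected_cost_dfs_ub; auto; try apply pos_INR. left. apply root_values_balanced.
Qed.

Lemma act_eqb_true x y : act_eqb x y = true -> x = y.
Proof. destruct x, y; simpl; congruence. Qed.

Lemma act_mem_filter f x l : act_mem x (filter f l) = true -> f x = true.
Proof.
  induction l as [|y l IH]; simpl; [discriminate|].
  destruct (f y) eqn:E; simpl; auto.
  unfold act_mem in *. simpl. intros H. apply orb_true_iff in H. destruct H as [H|H]; auto.
  apply act_eqb_true in H. subst; auto.
Qed.

Notation U := (uDFS L l1).

Lemma uDFS_nonneg h a x : 0 <= U h a x.
Proof.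
  unfold uDFS. cbv zeta.
  destruct (active_untrav_out L l1 h a) as [|y ys].
  - destruct (untrav_out L l1 h);
      [destruct (back l1 (pos_after l1 h)) as [b|]; [destruct (feasb L a (pos_after l1 h) b)|]|];
      unfold Defs.ind; destruct (act_eqb _ _); lra.
  - destruct (act_mem x (y :: ys)); [|lra].
    left. apply Rinv_0_lt_compat, lt_0_INR. simpl; lia.
Qed.

Lemma uDFS_infeasible h a x : feasb L a (pos_after l1 h) x = false -> U h a x = 0.
Proof.
  intros Hf. unfold uDFS. cbv zeta.
  destruct (active_untrav_out L l1 h a) as [|y ys] eqn:E.
  - assert (HWb : act_eqb x Wait = false) by (destruct x; simpl in *; congruence).
    destruct (untrav_out L l1 h) as [|z zs]; [|rewrite HWb; reflexivity].
    destruct (back l1 (pos_after l1 h)) as [b|]; [|rewrite HWb; reflexivity].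
    destruct (feasb L a (pos_after l1 h) b) eqn:Fb; [|rewrite HWb; reflexivity].
    destruct (act_eqb x b) eqn:Exb; [|reflexivity].
    apply act_eqb_true in Exb. subst. congruence.
  - destruct (act_mem x (y :: ys)) eqn:M; [|reflexivity].
    rewrite <- E in M. apply act_mem_filter in M. congruence.
Qed.

Lemma uDFS_sum h a : U h a Wait + U h a GoL + U h a GoR = 1.
Proof.
  unfold uDFS. cbv zeta. rewrite active_untrav_out_open.
  destruct (left_open h && nth (pos_after l1 h - 1) a false);
  destruct (right_open h && nth (pos_after l1 h) a false); simpl app;
    [unfold act_mem; simpl; field..|].
  rewrite untrav_out_open.
  destruct (left_open h); destruct (right_open h); simpl app; unfold Defs.ind; simpl; try lra.
  destruct (back l1 (pos_after l1 h)) as [b|]; [|simpl; lra].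
  destruct (feasb L a (pos_after l1 h) b); destruct b; simpl; lra.
Qed.

Lemma uDFS_is_DFS : is_DFS L l1 U.
Proof.
  split; [intros h a; split; [|split]; auto using uDFS_nonneg, uDFS_infeasible, uDFS_sum|].
  intros h a. cbv zeta. split; [|split].
  - intros Hne x Hx. unfold uDFS. cbv zeta.
    destruct (active_untrav_out L l1 h a); [contradiction|]. rewrite Hx. reflexivity.
  - intros HUA HU. unfold uDFS. cbv zeta. rewrite HUA.
    destruct (untrav_out L l1 h); [contradiction|]. reflexivity.
  - intros HU. assert (HUA : active_untrav_out L l1 h a = []).
    { unfold active_untrav_out. rewrite HU. reflexivity. }
    unfold uDFS. cbv zeta. rewrite HUA, HU.
    destruct (back l1 (pos_after l1 h)) as [b|].
    + split; intros F; rewrite F; unfold Defs.ind; [destruct b|]; reflexivity.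
    + reflexivity.
Qed.

Lemma uDFS_fork_fair : fork_fair U.
Proof.
  intros h a HI Fk. unfold root_fork in Fk.
  destruct (Nat.eqb_spec (pos_after l1 h) l1) as [Hv|]; [|discriminate].
  destruct (traversed h 0) eqn:C0, (traversed h (L - 1)) eqn:C1; try discriminate.
  cbn [andb negb] in Fk. apply andb_prop in Fk as [HaL HaR].
  destruct (dfs_phase_open _ _ HI) as [OL OR]. rewrite C0, C1, Hv in *.
  assert (EL : left_open h = true).
  { unfold left_open. cbv zeta. rewrite Hv, OL. rewrite Nat.leb_refl.
    replace (0 <? l1)%nat with true by (symmetry; apply Nat.ltb_lt; lia). reflexivity. }
  assert (ER : right_open h = true).
  { unfold right_open. cbv zeta. rewrite Hv, OR. rewrite Nat.leb_refl.
    replace (l1 <? L)%nat with true by (symmetry; apply Nat.ltb_lt; lia). reflexivity. }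
  unfold uDFS. cbv zeta. rewrite active_untrav_out_open, EL, ER, Hv, HaL, HaR. reflexivity.
Qed.

Lemma dfs_phase_leaf_last v cr e : dfs_phase v cr ->
  (cr 0%nat = true -> (e < l1)%nat -> cr e = true) /\
  (cr (L - 1)%nat = true -> (l1 <= e < L)%nat -> cr e = true).
Proof.
  intros HI. split; intros H0 He;
  destruct HI as [[Hb Hcr]|[[Hb Hcr]|[[Hb Hcr]|[[Hb Hcr]|[Hb Hcr]]]]];
  apply Hcr in H0; apply Hcr; lia.
Qed.

Lemma dfs_surv_le_leaf s e t : is_DFS L l1 s -> (e < L)%nat ->
  surv L l1 p s e t <= surv L l1 p s (if (e <? l1)%nat then 0 else L - 1)%nat t.
Proof.
  intros HD He. rewrite !surv_as_Ex. apply (Ex_mono L l1 p Hp01 s (proj1 HD)). intros h Hh.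
  destruct (dfs_phase_leaf_last _ _ e (hist_phase_reach s HD h Hh)) as [HL HR].
  destruct (Nat.ltb_spec e l1);
    [destruct (traversed h 0) eqn:Ef|destruct (traversed h (L - 1)) eqn:Ef];
    try (rewrite HL by auto) ; try (rewrite HR by (auto; lia)); destruct (traversed h e); lra.
Qed.

Lemma uDFS_payoff_le q n : hider_dist L q ->
  exists m, partial_payoff L l1 p U q n <= partial_payoff L l1 p U (eps_star l1 l2) m.
Proof.
  intros [Hq0 Hq1].
  set (Y := (root_time + (INR L - 1) * edge_time) - ((1 - p) ^ L) ^ n).
  assert (HY : forall e, (e < L)%nat -> rsum (fun t => surv L l1 p U e t) n <= Y).
  { intros e He.
    apply (Rle_trans _ (rsum (fun t => surv L l1 p U (if (e <? l1)%nat then 0 else L - 1)%nat t) n)).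
    - apply rsum_le. intros t _. apply (dfs_surv_le_leaf U e t uDFS_is_DFS He).
    - assert (Hleaf : forall w0 w1, 0 <= w0 -> 0 <= w1 ->
        expected_cost U w0 w1 n <= (w0 + w1) * Y).
      { intros w0 w1 H0 H1.
        pose proof (expected_cost_dfs_ub U w0 w1 n uDFS_is_DFS (or_intror uDFS_fork_fair) H0 H1)
          as Hub.
        rewrite initial_potential in Hub. unfold Y. eapply Rle_trans; [exact Hub|]. right. ring. }
      destruct (Nat.ltb_spec e l1).
      + specialize (Hleaf 1 0 ltac:(lra) ltac:(lra)). rewrite expected_cost_split in Hleaf. lra.
      + specialize (Hleaf 0 1 ltac:(lra) ltac:(lra)). rewrite expected_cost_split in Hleaf. lra. }
  destruct (expected_cost_lb U n (proj1 uDFS_is_DFS)) as [m Hm]. exists m.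
  rewrite payoff_eps_star. unfold partial_payoff.
  apply Rle_trans with (Y * rsum q L); [apply rsum_weighted_bound; auto|].
  rewrite Hq1, Rmult_1_r. assert (0 < INR L) by (apply lt_0_INR; lia).
  rewrite initial_potential, <- plus_INR in Hm.
  replace Y with (/ INR L * (INR L * Y)) by (field; lra).
  apply Rmult_le_compat_l; [left; apply Rinv_0_lt_compat; lra|]. unfold Y. lra.
Qed.

Lemma eps_star_dist : hider_dist L (eps_star l1 l2).
Proof.
  assert (0 < INR L) by (apply lt_0_INR; lia).
  split.
  - intros e _. unfold eps_star. destruct (e =? 0)%nat; [|destruct (e =? L - 1)%nat]; try lra;
    apply Rmult_le_pos; try apply pos_INR; left; apply Rinv_0_lt_compat; lra.
  - rewrite rsum_endpoints; [ | lia | ].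
    + unfold eps_star. rewrite Nat.eqb_refl.
      replace ((L - 1 =? 0)%nat) with false by (symmetry; apply Nat.eqb_neq; lia).
      rewrite Nat.eqb_refl. rewrite plus_INR in *. field. lra.
    + intros i Hi. unfold eps_star.
      replace ((i =? 0)%nat) with false by (symmetry; apply Nat.eqb_neq; lia).
      replace ((i =? L - 1)%nat) with false by (symmetry; apply Nat.eqb_neq; lia). reflexivity.
Qed.

End Game.

Theorem mainTheorem11 (l1 l2 : nat) (p : R) :
  (1 <= l1)%nat -> (1 <= l2)%nat -> 0 < p <= 1 ->
  (* every depth-first strategy is a best response to eps* *)
  (forall s : strategy, is_DFS (l1 + l2) l1 s ->
     best_response (l1 + l2) l1 p s (eps_star l1 l2)) /\
  (* uniform DFS and eps* are a pair of optimal strategies (saddle point) *)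
  is_DFS (l1 + l2) l1 (uDFS (l1 + l2) l1) /\
  hider_dist (l1 + l2) (eps_star l1 l2) /\
  (forall (s : strategy) (q : nat -> R),
     valid_strategy (l1 + l2) l1 s -> hider_dist (l1 + l2) q ->
     payoff_le (l1 + l2) l1 p (uDFS (l1 + l2) l1) q
               (uDFS (l1 + l2) l1) (eps_star l1 l2) /\
     payoff_le (l1 + l2) l1 p (uDFS (l1 + l2) l1) (eps_star l1 l2)
               s (eps_star l1 l2)).
Proof.
  intros Hl1 Hl2 Hp.
  pose proof (uDFS_is_DFS l1 l2 Hl1 Hl2) as HU.
  split; [|split; [exact HU|split; [exact (eps_star_dist l1 l2 Hl1 Hl2)|]]].
  - intros s HD. split; [exact (proj1 HD)|]. intros s' Hs' n.
    exact (dfs_best_response l1 l2 p Hl1 Hl2 Hp s s' n HD Hs').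
  - intros s q Hs Hq. split; intros n.
    + exact (uDFS_payoff_le l1 l2 p Hl1 Hl2 Hp q n Hq).
    + exact (dfs_best_response l1 l2 p Hl1 Hl2 Hp _ s n HU Hs).
Qed.
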